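(* Let $\mathcal C$ be a semi-abelian category, $\partial\colon X\to B$ a morphism and $\xi\colon B\flat X\to X$ an internal action of $B$ on $X$. Then $(\partial,\xi)$ is an internal precrossed module if and only if $[\partial,1_B]_\xi=0$ (the Precrossed Module Condition).
   Context: In a semi-abelian category, for objects $B,X$ let $\kappa_{B,X}\colon B\flat X\to B+X$ be the kernel of $\langle 1_B,0\rangle\colon B+X\to B$. An internal action of $B$ on $X$ is a morphism $\xi\colon B\flat X\to X$ satisfying the standard (Bourn–Janelidze) axioms; it induces via the semi-direct product construction a split short exact sequence $0\to X\xrightarrow{k}X\rtimes_\xi B\xrightarrow{d}B\to0$ with section $e\colon B\to X\rtimes_\xi B$ (with $q\colon B+X\to X\rtimes_\xi B$ the coequaliser of $\kappa_{B,X}$ and $\iota_2\circ\xi$, $k=q\circ\iota_2$, $e=q\circ\iota_1$). The $\xi$-commutator of $f\colon X\to Y$, $g\colon B\to Y$ is $[f,g]_\xi$, the regular image of $\langle f,g\rangle\circ\kappa$ where $\kappa\colon X\diamond_\xi B\to X+B$ is the kernel of $\langle k,e\rangle\colon X+B\to X\rtimes_\xi B$. The pair $(\partial,\xi)$ is an internal precrossed module if there exists $c\colon X\rtimes_\xi B\to B$ with $c\circ e=1_B$ and $c\circ k=\partial$. *)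

Set Implicit Arguments.
Unset Strict Implicit.

Record Category := {
  Ob :> Type;
  Hom : Ob -> Ob -> Type;
  idm : forall A, Hom A A;
  comp : forall A B C, Hom B C -> Hom A B -> Hom A C;
  comp_assoc : forall A B C D (h : Hom C D) (g : Hom B C) (f : Hom A B),
      comp h (comp g f) = comp (comp h g) f;
  id_left : forall A B (f : Hom A B), comp (idm B) f = f;
  id_right : forall A B (f : Hom A B), comp f (idm A) = f }.

Arguments Hom {c} _ _.
Arguments idm {c} _.
Arguments comp {c A B C} _ _.
Notation "g \o f" := (comp g f) (at level 40, left associativity).

Section Basic.
Context {C : Category}.

Definition mono {A B : C} (m : Hom A B) : Prop :=
  forall Z (a b : Hom Z A), m \o a = m \o b -> a = b.

Definition iso {A B : C} (f : Hom A B) : Prop :=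
  exists g : Hom B A, g \o f = idm A /\ f \o g = idm B.

Definition is_pullback {A B S P : C} (f : Hom A S) (g : Hom B S)
  (p1 : Hom P A) (p2 : Hom P B) : Prop :=
  f \o p1 = g \o p2 /\
  forall Z (a : Hom Z A) (b : Hom Z B), f \o a = g \o b ->
    exists! u : Hom Z P, p1 \o u = a /\ p2 \o u = b.

Definition has_pullbacks : Prop :=
  forall A B S (f : Hom A S) (g : Hom B S),
    exists P (p1 : Hom P A) (p2 : Hom P B), is_pullback f g p1 p2.

Definition is_kernel_pair {A B P : C} (f : Hom A B) (p1 p2 : Hom P A) : Prop :=
  is_pullback f f p1 p2.

Definition is_coequalizer {R A Q : C} (f g : Hom R A) (q : Hom A Q) : Prop :=
  q \o f = q \o g /\
  forall Z (h : Hom A Z), h \o f = h \o g -> exists! u : Hom Q Z, u \o q = h.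

Definition regular_epi {A Q : C} (e : Hom A Q) : Prop :=
  exists R (f g : Hom R A), is_coequalizer f g e.

(* regular category (finite limits are required separately) *)
Definition kernel_pairs_have_coequalizers : Prop :=
  forall A B P (f : Hom A B) (p1 p2 : Hom P A), is_kernel_pair f p1 p2 ->
    exists Q (q : Hom A Q), is_coequalizer p1 p2 q.

Definition regular_epis_pullback_stable : Prop :=
  forall A B S P (f : Hom A S) (g : Hom B S) (p1 : Hom P A) (p2 : Hom P B),
    is_pullback f g p1 p2 -> regular_epi f -> regular_epi p2.

(* internal equivalence relations, via generalized elements *)
Definition is_equivalence_relation {R A : C} (r1 r2 : Hom R A) : Prop :=
  (forall Z (a b : Hom Z R), r1 \o a = r1 \o b -> r2 \o a = r2 \o b -> a = b) /\
  (exists d : Hom A R, r1 \o d = idm A /\ r2 \o d = idm A) /\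
  (exists s : Hom R R, r1 \o s = r2 /\ r2 \o s = r1) /\
  (forall Z (a b : Hom Z R), r2 \o a = r1 \o b ->
     exists c : Hom Z R, r1 \o c = r1 \o a /\ r2 \o c = r2 \o b).

Definition effective_equivalence_relations : Prop :=
  forall R A (r1 r2 : Hom R A), is_equivalence_relation r1 r2 ->
    exists Q (f : Hom A Q), is_kernel_pair f r1 r2.

End Basic.

Record PointedCat := {
  pcat :> Category;
  zob : pcat;
  zto : forall A : pcat, Hom A zob;
  zfrom : forall A : pcat, Hom zob A;
  zto_unique : forall A (f : Hom A zob), f = zto A;
  zfrom_unique : forall A (f : Hom zob A), f = zfrom A }.

Arguments zob {p}.

Section Pointed.
Context {C : PointedCat}.

Definition zero (A B : C) : Hom A B := zfrom B \o zto A.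

Definition is_zero_object (Z : C) : Prop :=
  forall A : C, (exists! f : Hom A Z, True) /\ (exists! g : Hom Z A, True).

Definition is_kernel {K A B : C} (f : Hom A B) (k : Hom K A) : Prop :=
  f \o k = zero K B /\
  forall Z (h : Hom Z A), f \o h = zero Z B -> exists! u : Hom Z K, k \o u = h.

(* pointed Bourn-protomodularity: the split short five lemma *)
Definition split_short_five_lemma : Prop :=
  forall (K A B K' A' B' : C)
    (k : Hom K A) (p : Hom A B) (s : Hom B A)
    (k' : Hom K' A') (p' : Hom A' B') (s' : Hom B' A')
    (u : Hom K K') (v : Hom A A') (w : Hom B B'),
    is_kernel p k -> p \o s = idm B ->
    is_kernel p' k' -> p' \o s' = idm B' ->
    v \o k = k' \o u -> p' \o v = w \o p -> v \o s = s' \o w ->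
    iso u -> iso w -> iso v.

End Pointed.

Record SemiAbelian := {
  sa_pointed :> PointedCat;
  coprod : sa_pointed -> sa_pointed -> sa_pointed;
  inl : forall A B : sa_pointed, Hom A (coprod A B);
  inr : forall A B : sa_pointed, Hom B (coprod A B);
  copair : forall (A B Z : sa_pointed), Hom A Z -> Hom B Z -> Hom (coprod A B) Z;
  copair_inl : forall A B Z (f : Hom A Z) (g : Hom B Z), copair f g \o inl A B = f;
  copair_inr : forall A B Z (f : Hom A Z) (g : Hom B Z), copair f g \o inr A B = g;
  copair_unique : forall A B Z (f : Hom A Z) (g : Hom B Z) (h : Hom (coprod A B) Z),
      h \o inl A B = f -> h \o inr A B = g -> h = copair f g;
  (* chosen kernels (these exist in any pointed finitely complete category) *)
  kerO : forall A B : sa_pointed, Hom A B -> sa_pointed;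
  kerm : forall (A B : sa_pointed) (f : Hom A B), Hom (kerO f) A;
  kerm_kernel : forall (A B : sa_pointed) (f : Hom A B), is_kernel f (kerm f);
  (* finitely complete (the zero object is terminal) *)
  sa_pullbacks : has_pullbacks (C := sa_pointed);
  sa_coeq : kernel_pairs_have_coequalizers (C := sa_pointed);
  sa_stable : regular_epis_pullback_stable (C := sa_pointed);
  sa_exact : effective_equivalence_relations (C := sa_pointed);
  sa_protomodular : split_short_five_lemma (C := sa_pointed) }.

Arguments coprod {s} _ _.
Arguments inl {s} _ _.
Arguments inr {s} _ _.
Arguments copair {s A B Z} _ _.
Arguments kerO {s A B} _.
Arguments kerm {s A B} _.

Section Actions.
Context {C : SemiAbelian}.

Definition coprod_map {A B A' B' : C} (f : Hom A A') (g : Hom B B') :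
  Hom (coprod A B) (coprod A' B') := copair (inl A' B' \o f) (inr A' B' \o g).

Definition flat (B X : C) : C := kerO (copair (idm B) (zero X B)).
Definition kappa (B X : C) : Hom (flat B X) (coprod B X) :=
  kerm (copair (idm B) (zero X B)).

(* Bourn–Janelidze internal action: an algebra for the monad B flat (-):
   xi o eta_X = 1_X  and  xi o mu_X = xi o (B flat xi),
   where eta_X, mu_X and B flat xi are the unique morphisms induced on
   kernels by iota_2, <iota_1, kappa_{B,X}> and 1_B + xi respectively. *)
Definition is_internal_action {B X : C} (xi : Hom (flat B X) X) : Prop :=
  (forall eta : Hom X (flat B X),
      kappa B X \o eta = inr B X -> xi \o eta = idm X) /\
  (forall (mu bxi : Hom (flat B (flat B X)) (flat B X)),
      kappa B X \o mu = copair (inl B X) (kappa B X) \o kappa B (flat B X) ->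
      kappa B X \o bxi = coprod_map (idm B) xi \o kappa B (flat B X) ->
      xi \o mu = xi \o bxi).

(* (d, xi) is an internal precrossed module, given the semi-direct product
   data k : X -> X x| B and e : B -> X x| B *)
Definition is_precrossed {X B P : C} (d : Hom X B) (k : Hom X P) (e : Hom B P)
  : Prop :=
  exists c : Hom P B, c \o e = idm B /\ c \o k = d.

Definition regular_image_is_zero {D Y : C} (h : Hom D Y) : Prop :=
  forall (I : C) (r : Hom D I) (m : Hom I Y),
    regular_epi r -> mono m -> m \o r = h -> is_zero_object I.

End Actions.

From Stdlib Require Import Setoid.

(* With k = q o iota_2 and e = q o iota_1, the map <k, e> : X + B -> X x| B
   has kernel kap, and a retraction c with c o e = 1 and c o k = d is exactly
   a factorisation of <d, 1_B> through <k, e>.  Such a factorisation forces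
   <d, 1_B> o kap = 0.  Conversely, if <d, 1_B> o kap = 0, protomodularity
   (the kernel of a split epi and the splitting are jointly epic) shows that
   <d, 1_B> identifies everything <k, e> identifies; since X x| B is the
   coequaliser of kappa_{B,X} and iota_2 o xi, <d, 1_B> then factors through it.
   Finally, in a regular category a morphism has zero regular image iff it is
   zero. *)

Section CategoryFacts.
Context {C : Category}.

Lemma regular_epi_epi {A Q : C} (e : Hom A Q) : regular_epi e ->
  forall Z (x y : Hom Q Z), x \o e = y \o e -> x = y.
Proof.
  intros [R [f [g [Hfg Hcoeq]]]] Z x y Hxy.
  destruct (Hcoeq Z (x \o e)) as [u [_ Hu]].
  { rewrite <- !comp_assoc, Hfg; reflexivity. }
  rewrite <- (Hu x eq_refl), (Hu y (eq_sym Hxy)); reflexivity.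
Qed.

End CategoryFacts.

Section RegularImage.
Context {C : Category}.
Hypothesis pullbacks : has_pullbacks (C := C).
Hypothesis coequalizers : kernel_pairs_have_coequalizers (C := C).
Hypothesis stable : regular_epis_pullback_stable (C := C).

(* The image is the coequaliser of the kernel pair; the comparison map is
   mono because two maps it identifies become equal after pulling back the
   regular epi along both of them. *)
Lemma regular_epi_mono_factorization {D Y : C} (h : Hom D Y) :
  exists Im (r : Hom D Im) (m : Hom Im Y), regular_epi r /\ mono m /\ m \o r = h.
Proof.
  destruct (pullbacks _ _ _ h h) as [R [h1 [h2 [Hh Hhu]]]].
  destruct (coequalizers _ _ _ _ _ _ (conj Hh Hhu)) as [Im [r Hr]].
  pose proof Hr as [Hr12 Hr_univ].
  destruct (Hr_univ Y h Hh) as [m [Hmr _]].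
  assert (Hr_regular : regular_epi r) by (exists R, h1, h2; exact Hr).
  exists Im, r, m. split; [exact Hr_regular | split; [|exact Hmr]].
  intros W a b Hab.
  destruct (pullbacks _ _ _ r a) as [P1 [x1 [w1 Hpb1]]].
  pose proof (stable _ _ _ _ _ _ _ _ Hpb1 Hr_regular) as Hw1. destruct Hpb1 as [Hc1 _].
  destruct (pullbacks _ _ _ r (b \o w1)) as [P2 [x2 [w2 Hpb2]]].
  pose proof (stable _ _ _ _ _ _ _ _ Hpb2 Hr_regular) as Hw2. destruct Hpb2 as [Hc2 _].
  assert (Hx1 : r \o (x1 \o w2) = a \o (w1 \o w2))
    by (rewrite !comp_assoc, Hc1; reflexivity).
  assert (Hx2 : r \o x2 = a \o (w1 \o w2)).
  { destruct (Hhu P2 (x1 \o w2) x2) as [t [[Ht1 Ht2] _]].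
    - rewrite <- Hmr, <- !comp_assoc, Hx1, comp_assoc, Hab, Hc2, <- !comp_assoc.
      reflexivity.
    - rewrite <- Hx1, <- Ht1, <- Ht2, !comp_assoc, Hr12; reflexivity. }
  apply (regular_epi_epi _ Hw1), (regular_epi_epi _ Hw2).
  rewrite <- !comp_assoc, <- Hx2, Hc2, <- comp_assoc; reflexivity.
Qed.

End RegularImage.

Section PointedFacts.
Context {C : PointedCat}.

Lemma zero_comp (A B Z : C) (f : Hom Z A) : zero A B \o f = zero Z B.
Proof. unfold zero. rewrite <- comp_assoc, (zto_unique (zto A \o f)); reflexivity. Qed.

Lemma comp_zero (A B Z : C) (g : Hom B Z) : g \o zero A B = zero A Z.
Proof. unfold zero. rewrite comp_assoc, (zfrom_unique (g \o zfrom B)); reflexivity. Qed.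

Lemma zero_object_comp {O A B : C} (HO : is_zero_object O)
  (r : Hom A O) (m : Hom O B) : m \o r = zero A B.
Proof.
  destruct (HO A) as [[r0 [_ Hr0]] _].
  rewrite <- (Hr0 r I), (Hr0 (zero A O) I), comp_zero; reflexivity.
Qed.

Lemma zero_object_of_idm (O : C) : zfrom O \o zto O = idm O -> is_zero_object O.
Proof.
  intros Hid A. split.
  - exists (zero A O). split; [trivial|]. intros f _.
    rewrite <- (id_left f), <- Hid, <- comp_assoc, (zto_unique (zto O \o f));
      reflexivity.
  - exists (zero O A). split; [trivial|]. intros g _.
    rewrite <- (id_right g), <- Hid, comp_assoc, (zfrom_unique (g \o zfrom O));
      reflexivity.
Qed.

Section Pullbacks.
Hypothesis pullbacks : has_pullbacks (C := C).

Lemma binary_products (A Z : C) : exists (Pr : C) (p1 : Hom Pr A) (p2 : Hom Pr Z),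
  forall W (x : Hom W A) (y : Hom W Z), exists! u, p1 \o u = x /\ p2 \o u = y.
Proof.
  destruct (pullbacks _ _ _ (zto A) (zto Z)) as [Pr [p1 [p2 [_ Hpb]]]].
  exists Pr, p1, p2. intros W x y. apply Hpb.
  rewrite (zto_unique (zto A \o x)), (zto_unique (zto Z \o y)); reflexivity.
Qed.

(* The equaliser of a and b is the pullback of the graphs <1, a> and <1, b>. *)
Lemma equalizers {A Z : C} (a b : Hom A Z) : exists E (e : Hom E A),
  a \o e = b \o e /\ mono e /\
  forall W (z : Hom W A), a \o z = b \o z -> exists u, e \o u = z.
Proof.
  destruct (binary_products A Z) as [Pr [p1 [p2 Hprod]]].
  destruct (Hprod A (idm A) a) as [ga [[Hga1 Hga2] _]].
  destruct (Hprod A (idm A) b) as [gb [[Hgb1 Hgb2] _]].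
  destruct (pullbacks _ _ _ ga gb) as [E [e1 [e2 [Hc Hpb]]]].
  assert (He12 : e1 = e2).
  { pose proof (f_equal (comp p1) Hc) as H.
    rewrite !comp_assoc, Hga1, Hgb1, !id_left in H. exact H. }
  exists E, e1. split; [|split].
  - rewrite <- Hga2, <- comp_assoc, Hc, He12, comp_assoc, Hgb2. reflexivity.
  - intros W x y Hxy.
    destruct (Hpb W (e1 \o x) (e2 \o x)) as [u [_ Hu]].
    { rewrite !comp_assoc, Hc; reflexivity. }
    rewrite <- (Hu x (conj eq_refl eq_refl)).
    apply Hu. rewrite <- He12. split; symmetry; exact Hxy.
  - intros W z Hz.
    destruct (Hprod W z (a \o z)) as [v [_ Hv]].
    assert (Hg : ga \o z = gb \o z).
    { rewrite <- (Hv (ga \o z)), (Hv (gb \o z)); [reflexivity| |];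
        rewrite !comp_assoc; [rewrite Hgb1, Hgb2, Hz | rewrite Hga1, Hga2];
        rewrite id_left; split; reflexivity. }
    destruct (Hpb W z z Hg) as [u [[Hu _] _]].
    exists u; exact Hu.
Qed.

Hypothesis protomodular : split_short_five_lemma (C := C).

(* The equaliser of a and b contains both k and s, so the split short five
   lemma makes it an isomorphism. *)
Lemma kernel_section_jointly_epic {K A B Z : C} (k : Hom K A) (p : Hom A B)
  (s : Hom B A) (a b : Hom A Z) : is_kernel p k -> p \o s = idm B ->
  a \o k = b \o k -> a \o s = b \o s -> a = b.
Proof.
  intros [Hpk Hk_univ] Hps Hak Has.
  destruct (equalizers a b) as [E [e [Hae [He_mono He_univ]]]].
  destruct (He_univ _ k Hak) as [k0 Hk0].
  destruct (He_univ _ s Has) as [s0 Hs0].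
  assert (He_iso : iso e).
  { apply (protomodular _ _ _ _ _ _ k0 (p \o e) s0 k p s (idm K) e (idm B)).
    - split.
      + rewrite <- comp_assoc, Hk0; exact Hpk.
      + intros W h Hh. destruct (Hk_univ W (e \o h)) as [u [Hu Hu_uniq]].
        { rewrite comp_assoc; exact Hh. }
        exists u. split.
        * apply He_mono. rewrite comp_assoc, Hk0; exact Hu.
        * intros u' Hu'. apply Hu_uniq. rewrite <- Hk0, <- comp_assoc, Hu'; reflexivity.
    - rewrite <- comp_assoc, Hs0; exact Hps.
    - split; assumption.
    - exact Hps.
    - rewrite Hk0, id_right; reflexivity.
    - rewrite id_left; reflexivity.
    - rewrite Hs0, id_right; reflexivity.
    - exists (idm K); split; apply id_left.
    - exists (idm B); split; apply id_left. }
  destruct He_iso as [e' [_ Hee']].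
  rewrite <- (id_right a), <- (id_right b), <- Hee', !comp_assoc, Hae; reflexivity.
Qed.

End Pullbacks.
End PointedFacts.

Section SemiAbelianFacts.
Context {C : SemiAbelian}.

Lemma regular_image_is_zero_zero (D Y : C) : regular_image_is_zero (zero D Y).
Proof.
  intros Im r m Hr Hm Hmr.
  assert (Hr0 : r = zero D Im) by (apply Hm; rewrite Hmr, comp_zero; reflexivity).
  apply zero_object_of_idm, (regular_epi_epi _ Hr).
  rewrite Hr0, !comp_zero; reflexivity.
Qed.

Lemma regular_image_is_zeroP {D Y : C} (h : Hom D Y) :
  regular_image_is_zero h <-> h = zero D Y.
Proof.
  split.
  - intro Hh.
    destruct (regular_epi_mono_factorization (@sa_pullbacks C) (@sa_coeq C)
      (@sa_stable C) h) as [Im [r [m [Hr [Hm Hmr]]]]].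
    rewrite <- Hmr. exact (zero_object_comp (Hh Im r m Hr Hm Hmr) r m).
  - intros ->. apply regular_image_is_zero_zero.
Qed.

(* Test on the kernel pair (r1, r2) of f: its kernel kerm r1 lies over
   ker f, and its diagonal splits r1. *)
Lemma comp_eq_of_comp_kernel_zero {A S Y K : C} (f : Hom A S) (g : Hom A Y)
  (kap : Hom K A) : is_kernel f kap -> g \o kap = zero K Y ->
  forall Z (a b : Hom Z A), f \o a = f \o b -> g \o a = g \o b.
Proof.
  intros [_ Hkap_univ] Hgkap Z a b Hab.
  destruct (@sa_pullbacks C _ _ _ f f) as [R [r1 [r2 [Hr Hr_univ]]]].
  destruct (Hr_univ _ (idm A) (idm A) eq_refl) as [diag [[Hdiag1 Hdiag2] _]].
  destruct (kerm_kernel r1) as [Hr1k _].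
  assert (Hgr : g \o r1 = g \o r2).
  { apply (kernel_section_jointly_epic (@sa_pullbacks C) (@sa_protomodular C)
      (kerm r1) r1 diag); [apply kerm_kernel | exact Hdiag1 | |].
    - destruct (Hkap_univ _ (r2 \o kerm r1)) as [t [Ht _]].
      { rewrite comp_assoc, <- Hr, <- comp_assoc, Hr1k, comp_zero; reflexivity. }
      rewrite <- !comp_assoc, Hr1k, comp_zero, <- Ht, comp_assoc, Hgkap, zero_comp.
      reflexivity.
    - rewrite <- !comp_assoc, Hdiag1, Hdiag2; reflexivity. }
  destruct (Hr_univ Z a b Hab) as [u [[Hu1 Hu2] _]].
  rewrite <- Hu1, <- Hu2, !comp_assoc, Hgr; reflexivity.
Qed.

Lemma copair_comp_swap {A B Z : C} (f : Hom A Z) (g : Hom B Z) :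
  copair f g \o copair (inr A B) (inl A B) = copair g f.
Proof.
  apply copair_unique; rewrite <- comp_assoc;
    [rewrite copair_inl, copair_inr | rewrite copair_inr, copair_inl]; reflexivity.
Qed.

Lemma comp_copair {A B Z W : C} (h : Hom Z W) (f : Hom A Z) (g : Hom B Z) :
  h \o copair f g = copair (h \o f) (h \o g).
Proof.
  apply copair_unique; rewrite <- comp_assoc;
    [rewrite copair_inl | rewrite copair_inr]; reflexivity.
Qed.

Lemma copair_eta {A B Z : C} (h : Hom (coprod A B) Z) :
  copair (h \o inl A B) (h \o inr A B) = h.
Proof. symmetry; apply copair_unique; reflexivity. Qed.

Lemma precrossed_iff_copair_factors {X B P : C} (d : Hom X B)
  (k : Hom X P) (e : Hom B P) :
  is_precrossed d k e <-> exists c : Hom P B, c \o copair k e = copair d (idm B).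
Proof.
  split.
  - intros [c [Hce Hck]]. exists c.
    apply copair_unique; rewrite <- comp_assoc;
      [rewrite copair_inl | rewrite copair_inr]; assumption.
  - intros [c Hc]. exists c. split.
    + rewrite <- (copair_inr d (idm B)), <- Hc, <- comp_assoc, copair_inr; reflexivity.
    + rewrite <- (copair_inl d (idm B)), <- Hc, <- comp_assoc, copair_inl; reflexivity.
Qed.

End SemiAbelianFacts.

Theorem mainTheorem9 (C : SemiAbelian) (X B : C) (d : Hom X B)
  (xi : Hom (flat B X) X) (Hxi : is_internal_action xi)
  (P : C) (q : Hom (coprod B X) P)
  (Hq : is_coequalizer (kappa B X) (inr B X \o xi) q)
  (D : C) (kap : Hom D (coprod X B))
  (Hkap : is_kernel (copair (q \o inr B X) (q \o inl B X)) kap) :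
  is_precrossed d (q \o inr B X) (q \o inl B X) <->
  regular_image_is_zero (copair d (idm B) \o kap).
Proof.
  rewrite precrossed_iff_copair_factors, regular_image_is_zeroP.
  set (f := copair (q \o inr B X) (q \o inl B X)) in *.
  assert (Hf_swap : f \o copair (inr X B) (inl X B) = q)
    by (unfold f; rewrite copair_comp_swap; apply copair_eta).
  split.
  - intros [c Hc]. rewrite <- Hc, <- comp_assoc, (proj1 Hkap), comp_zero; reflexivity.
  - intro Hkap0. destruct Hq as [Hq_coeq Hq_univ].
    assert (Hf_eq : f \o (copair (inr X B) (inl X B) \o kappa B X) = f \o (inl X B \o xi)).
    { rewrite comp_assoc, Hf_swap, Hq_coeq, !comp_assoc.
      unfold f. rewrite copair_inl; reflexivity. }
    pose proof (comp_eq_of_comp_kernel_zero _ _ _ Hkap Hkap0 _ _ _ Hf_eq) as Hg_eq.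
    destruct (Hq_univ B (copair (idm B) d)) as [c [Hc _]].
    + rewrite <- (copair_comp_swap d (idm B)), <- !comp_assoc, Hg_eq,
        (comp_assoc _ (inr B X)), copair_inr; reflexivity.
    + exists c. rewrite <- (copair_comp_swap (idm B) d), <- Hc, <- comp_assoc, comp_copair.
      reflexivity.
Qed.
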